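(* Let $\mathcal N$ be a normal network on $X$ with $|X|\ge 3$, and let $\mathcal R$ be the set of triples displayed by $\mathcal N$. Let $\{a,b\}\subseteq X$ with $a\neq b$. Then $\{a,b\}$ is a cherry of $\mathcal N$ if and only if the following holds: whenever $xy|z\in\mathcal R$ and $\{a,b\}\subseteq\{x,y,z\}$, we have $\{a,b\}=\{x,y\}$.
   Context: A (rooted binary) phylogenetic network on $X$ is a rooted acyclic digraph without parallel arcs whose root has in-degree $0$ and out-degree $2$, whose out-degree-$0$ vertices (leaves) have in-degree $1$ and form the set $X$, and whose other vertices are tree vertices (in-degree $1$, out-degree $2$) or reticulations (in-degree $2$, out-degree $1$). A reticulation arc $(u,v)$ (arc into a reticulation) is a shortcut if there is another directed path from $u$ to $v$. The network is tree-child if every non-leaf vertex has a child that is a tree vertex or a leaf, and normal if it is tree-child without shortcuts. For a leaf $x$, $p_x$ denotes its parent; $\{a,b\}$ is a cherry if $p_a=p_b$. A triple $xy|z$ is the rooted binary phylogenetic tree on $\{x,y,z\}$ in which $x,y$ share a parent (so $xy|z=yx|z$). The network displays a phylogenetic tree $\mathcal T$ on a subset of $X$ if $\mathcal T$ can be obtained from the network by deleting arcs and vertices and suppressing vertices of in-degree one and out-degree one. *)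

From mathcomp Require Import all_boot.
Set Implicit Arguments. Unset Strict Implicit. Unset Printing Implicit Defensive.

(* A directed graph is given by a finite vertex type V and an arc relation
   E : rel V (so there are no parallel arcs by construction). *)
Section Networks.
Variables (V : finType) (E : rel V).

Definition indeg (v : V) : nat := #|[set u | E u v]|.
Definition outdeg (v : V) : nat := #|[set w | E v w]|.

Definition is_root (v : V) : bool := (indeg v == 0) && (outdeg v == 2).
Definition is_leaf (v : V) : bool := (indeg v == 1) && (outdeg v == 0).
Definition is_tree_vertex (v : V) : bool := (indeg v == 1) && (outdeg v == 2).
Definition is_reticulation (v : V) : bool := (indeg v == 2) && (outdeg v == 1).

(* The leaf set X: the out-degree-0 vertices (leaves are identified with
   their labels). *)
Definition leaves : {set V} := [set v | outdeg v == 0].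

(* A directed path from u to v with vertex sequence u :: p. *)
Definition dpath (u v : V) (p : seq V) : bool := path E u p && (last u p == v).

Definition acyclic : Prop :=
  forall (v : V) (p : seq V), dpath v v p -> p = [::].

Definition phylo_network : Prop :=
  acyclic /\
  exists r : V, is_root r /\
    forall v : V, v != r ->
      [|| is_leaf v, is_tree_vertex v | is_reticulation v].

Definition tree_child : Prop :=
  forall v : V, ~~ is_leaf v ->
    exists w : V, E v w && (is_tree_vertex w || is_leaf w).

(* The reticulation arc (u,v) is a shortcut if there is another directed
   path from u to v (i.e. one different from the arc itself). *)
Definition shortcut (u v : V) : Prop :=
  [/\ E u v, is_reticulation v &
      exists p : seq V, dpath u v p /\ p != [:: v]].

Definition normal_network : Prop :=
  phylo_network /\ tree_child /\ forall u v : V, ~ shortcut u v.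

(* The network displays the triple xy|z: some subgraph (obtained by deleting
   arcs and vertices) is a subdivision of xy|z, i.e. suppressing its
   in-degree-1/out-degree-1 vertices yields xy|z.  Such a subgraph consists
   of a vertex r' (its root), a vertex u (the parent of the cherry x,y), and
   nontrivial directed paths r'->u, r'->z, u->x, u->y that are internally
   vertex-disjoint. *)
Definition displays_triple (x y z : V) : Prop :=
  [/\ x \in leaves, y \in leaves, z \in leaves &
      [/\ x != y, x != z & y != z]] /\
  exists (r' u : V) (p1 p2 p3 p4 : seq V),
    [/\ dpath r' u p1, dpath r' z p2, dpath u x p3 & dpath u y p4] /\
    [/\ p1 != [::], p2 != [::], p3 != [::] & p4 != [::]] /\
    (forall w, w \in r' :: p1 -> w \in r' :: p2 -> w = r') /\
    (forall w, w \in u :: p3 -> w \in u :: p4 -> w = u) /\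
    (forall w, w \in r' :: p1 -> w \in u :: p3 -> w = u) /\
    (forall w, w \in r' :: p1 -> w \in u :: p4 -> w = u) /\
    (forall w, w \in r' :: p2 -> w \notin u :: p3) /\
    (forall w, w \in r' :: p2 -> w \notin u :: p4).

Definition cherry (a b : V) : Prop := exists p : V, E p a && E p b.

End Networks.

From mathcomp Require Import all_boot zify.
Set Implicit Arguments. Unset Strict Implicit. Unset Printing Implicit Defensive.

(* If a and b have the common parent p, a displayed triple in which a is the
   outgroup and b is in the cherry would need two internally disjoint paths,
   one to a and one to b, both passing through p.
   Conversely, let p and q be the parents of a and b. If p is a tree vertex
   not above b, its other child leads down to a leaf c, and ac|b is displayed;
   if p is a reticulation with a parent s not above b, a tree child of s leads
   down to a leaf c, and again ac|b is displayed. So when no such triple exists,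
   p (or both parents of p) lies above b, and symmetrically for q; in each of
   the four resulting cases acyclicity, the absence of shortcuts and the
   tree-child property force p = q. *)

Lemma other_mem_card2 (T : finType) (A : {set T}) x :
  #|A| = 2 -> exists2 y, y \in A & y != x.
Proof.
move=> A2; have /card_gt0P[y] : 0 < #|A :\ x|.
  by have := cardsD1 x A; rewrite A2; case: (x \in A) => /=; lia.
by rewrite in_setD1 => /andP[yx yA]; exists y.
Qed.

Lemma connect_to_sink (T : finType) (e : rel T) :
  (forall v w, e v w -> ~~ connect e w v) ->
  forall v, exists2 w, connect e v w & forall w', ~~ e w w'.
Proof.
move=> no_back v; have [n] := ubnP #|[set t | connect e v t]|.
elim: n v => // n IHn v; rewrite ltnS => size_v.
have [w vw | no_succ] := pickP (e v); last by exists v => // w; rewrite no_succ.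
have desc_w : [set t | connect e w t] \proper [set t | connect e v t].
  apply/properP; split.
    by apply/subsetP => t; rewrite !inE; apply: connect_trans (connect1 vw).
  by exists v; rewrite !inE ?connect0 ?no_back.
have [|u wu u_sink] := IHn w; first exact: leq_trans (proper_card desc_w) size_v.
by exists u => //; exact: connect_trans (connect1 vw) wu.
Qed.

Section Paths.
Variables (V : finType) (E : rel V).

Lemma path_connect_last x s w : path E x s -> w \in x :: s -> connect E w (last x s).
Proof.
move=> xs w_in; case/splitPl: s / w_in xs => s1 s2 <-.
by rewrite cat_path last_cat => /andP[_ s2_path]; apply/connectP; exists s2.
Qed.

Lemma path_pred x s y : path E x s -> y \in s -> exists2 y', y' \in x :: s & E y' y.
Proof.
move=> xs y_in; case/splitPr: y_in xs => s1 s2.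
rewrite cat_path /= => /and3P[_ last_y _].
by exists (last x s1) => //; rewrite -cat_cons mem_cat mem_last.
Qed.

Lemma dpath_mem_last u v s : dpath E u v s -> s != [::] -> v \in s.
Proof.
case/andP => _ /eqP <-; case/lastP: s => // s w _.
by rewrite last_rcons mem_rcons mem_head.
Qed.

Lemma connect_last_arc v y : connect E v y -> v != y -> exists2 y', connect E v y' & E y' y.
Proof.
move=> /connectP[p vp ->]; case/lastP: p vp => [|p y']; first by rewrite eqxx.
rewrite rcons_path last_rcons => /andP[vp py'] _.
by exists (last v p) => //; apply/connectP; exists p.
Qed.

Lemma connect_split_paths r0 u z : connect E r0 u -> connect E r0 z ->
  exists r' p1 p2, [/\ dpath E r' u p1, dpath E r' z p2 &
    forall w, w \in r' :: p1 -> w \in r' :: p2 -> w = r'].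
Proof.
move=> /connectP[p1 h1 ->] /connectP[p2 h2 ->].
(* Restart both paths from a common vertex until they share none. *)
have [n] := ubnP (size p1 + size p2).
elim: n r0 p1 p2 h1 h2 => // n IHn r0 p1 p2 h1 h2 size_p.
have [/hasP[w w1 w2] | /hasPn p12] := boolP (has (mem p2) p1).
  case/splitPr: w1 h1 size_p => s1 s1'; rewrite cat_path last_cat /= => /and3P[_ _ h1'].
  case/splitPr: w2 h2 => s2 s2'; rewrite cat_path last_cat /= => /and3P[_ _ h2'].
  rewrite !size_cat /= => size_p; apply: (IHn w) => //; lia.
exists r0, p1, p2; split; rewrite /dpath ?h1 ?h2 ?eqxx //.
move=> w; rewrite !inE => /predU1P[-> //|w1] /predU1P[-> //|w2].
by move: (p12 w w1); rewrite inE w2.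
Qed.

Lemma arc_tail_nonleaf v w : E v w -> v \notin leaves E.
Proof.
move=> vw; rewrite inE /outdeg cards_eq0; apply/set0Pn.
by exists w; rewrite inE.
Qed.

Lemma leaf_connect x w : x \in leaves E -> connect E x w -> w = x.
Proof.
move=> lx /connectP[[|v p] //= /andP[xv _] _].
by move: lx; rewrite (negbTE (arc_tail_nonleaf xv)).
Qed.

Hypothesis acyc : acyclic E.

Lemma arc_not_connect_back v w : E v w -> ~~ connect E w v.
Proof.
move=> vw; apply/negP => /connectP[p wp wv].
by have := @acyc v (w :: p); rewrite /dpath /= vw wp -wv eqxx => /(_ isT).
Qed.

Lemma connect_antisym x y : connect E x y -> connect E y x -> x = y.
Proof.
move=> /connectP[p xp ->] /connectP[q yq yx].
have := @acyc x (p ++ q); rewrite /dpath cat_path xp yq last_cat -yx eqxx.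
by case: p {xp yq yx} => // v p /(_ isT).
Qed.

Lemma connect_leaf v : exists2 c, connect E v c & c \in leaves E.
Proof.
have [c vc c_sink] := connect_to_sink arc_not_connect_back v.
exists c => //; rewrite inE /outdeg cards_eq0; apply/eqP/setP => w.
by rewrite !inE (negbTE (c_sink w)).
Qed.

Lemma displays_triple_of_paths r0 u x y z p3 p4 :
  connect E r0 u -> connect E r0 z -> ~~ connect E u z ->
  dpath E u x p3 -> dpath E u y p4 -> p3 != [::] -> p4 != [::] ->
  (forall w, w \in p3 -> w \notin p4) ->
  x \in leaves E -> y \in leaves E -> z \in leaves E ->
  displays_triple E x y z.
Proof.
move=> r0u r0z uNz d3 d4 n3 n4 p34 lx ly lz.
have [r' [p1 [p2 [d1 d2 p12]]]] := connect_split_paths r0u r0z.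
have above_u w : w \in r' :: p1 -> connect E w u.
  by case/andP: d1 => h1 /eqP <-; apply: path_connect_last.
have above_z w : w \in r' :: p2 -> connect E w z.
  by case/andP: d2 => h2 /eqP <-; apply: path_connect_last.
have below3 w : w \in u :: p3 -> connect E u w.
  by case/andP: d3 => h3 _; apply: path_connect.
have below4 w : w \in u :: p4 -> connect E u w.
  by case/andP: d4 => h4 _; apply: path_connect.
have x3 := dpath_mem_last d3 n3; have y4 := dpath_mem_last d4 n4.
split.
  split=> //; split; apply/eqP => e; first by move: (p34 _ x3); rewrite e y4.
    by move: uNz; rewrite -e below3 // inE x3 orbT.
  by move: uNz; rewrite -e below4 // inE y4 orbT.
exists r', u, p1, p2, p3, p4; split=> //; split.
  split=> //; apply/eqP => p_nil.
    by move: d1 uNz; rewrite p_nil /dpath /= => /eqP <-; rewrite above_z ?mem_head.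
  move: d2 (above_u r' (mem_head _ _)); rewrite p_nil /dpath /= => /eqP ->.
  by move/(leaf_connect lz) => uz; rewrite uz connect0 in uNz.
split=> //; split.
  move=> w; rewrite !inE => /predU1P[-> //|w3] /predU1P[-> //|w4].
  by move: (p34 _ w3); rewrite w4.
split; first by move=> w w1 w3; apply: connect_antisym (above_u w w1) (below3 w w3).
split; first by move=> w w1 w4; apply: connect_antisym (above_u w w1) (below4 w w4).
split=> w w2; apply: contraNN uNz => w34.
  exact: connect_trans (below3 w w34) (above_z w w2).
exact: connect_trans (below4 w w34) (above_z w w2).
Qed.

End Paths.

Section NormalNetwork.
Variables (V : finType) (E : rel V) (r : V).
Hypothesis acyc : acyclic E.
Hypothesis root_r : is_root E r.
Hypothesis vertex_kinds : forall v, v != r ->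
  [|| is_leaf E v, is_tree_vertex E v | is_reticulation E v].
Hypothesis tc : tree_child E.
Hypothesis no_shortcut : forall u v, ~ shortcut E u v.

Lemma outdeg_le2 v : outdeg E v <= 2.
Proof.
have [-> | /vertex_kinds] := eqVneq v r; first by case/andP: root_r => _ /eqP ->.
by case/or3P => /andP[_ /eqP ->].
Qed.

Lemma arc_tail_kind v w : E v w -> outdeg E v = 2 \/ is_reticulation E v.
Proof.
move=> vw; have [-> | /vertex_kinds] := eqVneq v r.
  by left; case/andP: root_r => _ /eqP.
case/or3P => [/andP[_ /eqP v0] | /andP[_ /eqP] | ]; [|by left|by right].
by move: (arc_tail_nonleaf vw); rewrite inE v0.
Qed.

Lemma root_connect v : connect E r v.
Proof.
have rev_no_back w w' : [rel x y | E y x] w w' -> ~~ connect [rel x y | E y x] w' w.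
  by rewrite /= connect_rev; apply: arc_not_connect_back.
have [s] := connect_to_sink rev_no_back v; rewrite connect_rev /= => sv s_src.
have [<- // | /vertex_kinds s_kind] := eqVneq s r.
have /card_gt0P[u] : 0 < indeg E s by case/or3P: s_kind => /andP[/eqP -> _].
by rewrite inE => us; move: (s_src u); rewrite us.
Qed.

Lemma leaf_indeg a : a \in leaves E -> indeg E a = 1.
Proof.
rewrite inE => /eqP a0; have /vertex_kinds : a != r.
  by apply/eqP => ar; move: a0; rewrite ar; case/andP: root_r => _ /eqP ->.
by rewrite /is_leaf /is_tree_vertex /is_reticulation a0 /= !andbT !andbF !orbF => /eqP.
Qed.

Lemma leaf_has_parent a : a \in leaves E -> exists p, E p a.
Proof.
move=> la; have /card_gt0P[p] : 0 < indeg E a by rewrite leaf_indeg.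
by rewrite inE; exists p.
Qed.

Lemma leaf_parent_uniq a p p' : a \in leaves E -> E p a -> E p' a -> p = p'.
Proof.
move=> la pa p'a; have /card_le1_eqP A1 : indeg E a <= 1 by rewrite leaf_indeg.
by apply: (A1 p' p); rewrite inE.
Qed.

Lemma reticulation_child_uniq p w w' : is_reticulation E p -> E p w -> E p w' -> w = w'.
Proof.
case/andP=> _ /eqP p1 pw pw'; have /card_le1_eqP A1 : outdeg E p <= 1 by rewrite p1.
by apply: (A1 w' w); rewrite inE.
Qed.

Lemma reticulation_neq_indeg1 p t : is_reticulation E p -> indeg E t = 1 -> p != t.
Proof. by case/andP=> /eqP p2 _ t1; apply/eqP => pt; rewrite pt t1 in p2. Qed.

Lemma arc_tail_tree_child v w : E v w -> exists2 t, E v t & indeg E t = 1.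
Proof.
move/arc_tail_nonleaf => vN; have [|t /andP[vt t_kind]] := tc (v := v).
  by apply: contra vN => /andP[_ v0]; rewrite inE.
by exists t => //; case/orP: t_kind => /andP[/eqP].
Qed.

Lemma leaf_parent_mem_path x px v s : x \in leaves E -> E px x ->
  path E v s -> x \in s -> px \in v :: s.
Proof.
by move=> lx pxx vs /(path_pred vs)[y y_in yx]; rewrite (leaf_parent_uniq lx pxx yx).
Qed.

Lemma leaf_parent_mem_dpath x px v s : x \in leaves E -> E px x ->
  dpath E v x s -> s != [::] -> px \in v :: s.
Proof.
move=> lx pxx d sn; case/andP: (d) => vs _.
exact: leaf_parent_mem_path lx pxx vs (dpath_mem_last d sn).
Qed.

Lemma connect_leaf_parent v x px : x \in leaves E -> E px x ->
  connect E v x -> v \notin leaves E -> connect E v px.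
Proof.
move=> lx pxx vx vN; have [|y vy yx] := connect_last_arc vx.
  by apply: contraNneq vN => ->.
by rewrite (leaf_parent_uniq lx pxx yx).
Qed.

Lemma reticulation_parents_incomparable p s s' : is_reticulation E p ->
  E s p -> E s' p -> s != s' -> ~~ connect E s s'.
Proof.
move=> rp sp s'p ss'; apply/negP => /connectP[P sP s'_eq].
apply: (no_shortcut (u := s) (v := p)); split=> //; exists (rcons P p); split.
  by rewrite /dpath rcons_path sP -s'_eq s'p last_rcons eqxx.
case: P {sP} s'_eq => [/= s'_eq | v P _]; first by rewrite s'_eq eqxx in ss'.
by apply/eqP => /(congr1 size); rewrite /= size_rcons.
Qed.

Lemma tree_parent_splits a b p : a \in leaves E -> b \in leaves E -> E p a ->
  outdeg E p = 2 -> ~~ connect E p b -> exists c, displays_triple E a c b.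
Proof.
move=> la lb pa p2 pNb; have [w] := other_mem_card2 a p2; rewrite inE => pw wa.
have [c /connectP[pc wpc c_eq] lc] := connect_leaf acyc w.
have pN : p \notin w :: pc.
  by apply: contraNN (arc_not_connect_back acyc pw); apply: path_connect.
have aN : a \notin w :: pc.
  rewrite inE negb_or eq_sym wa /=; apply: contraNN pN.
  exact: leaf_parent_mem_path la pa wpc.
exists c; apply: (displays_triple_of_paths acyc (root_connect p) (root_connect b) pNb
  (p3 := [:: a]) (p4 := w :: pc)) => //.
- by rewrite /dpath /= pa eqxx.
- by rewrite /dpath /= pw wpc -c_eq eqxx.
- by move=> t; rewrite inE => /eqP ->.
Qed.

Lemma reticulation_parent_splits a b p s : a \in leaves E -> b \in leaves E -> E p a ->
  is_reticulation E p -> E s p -> ~~ connect E s b -> exists c, displays_triple E a c b.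
Proof.
move=> la lb pa rp sp sNb; have [t st t1] := arc_tail_tree_child sp.
have [c /connectP[pc tpc c_eq] lc] := connect_leaf acyc t.
have stpc : path E s (t :: pc) by rewrite /= st tpc.
have pN : p \notin t :: pc.
  rewrite inE negb_or reticulation_neq_indeg1 //=.
  apply/negP => /(path_pred tpc)[y y_in yp].
  have sy : s != y.
    by apply: contraNneq (arc_not_connect_back acyc st) => ->; apply: path_connect y_in.
  case/negP: (reticulation_parents_incomparable rp sp yp sy).
  exact: connect_trans (connect1 st) (path_connect tpc y_in).
have aN : a \notin t :: pc.
  apply/negP => /(leaf_parent_mem_path la pa stpc); rewrite inE (negbTE pN) orbF.
  by move/eqP => ps; move: (arc_not_connect_back acyc sp); rewrite ps connect0.
exists c; apply: (displays_triple_of_paths acyc (root_connect s) (root_connect b) sNb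
  (p3 := [:: p; a]) (p4 := t :: pc)) => //.
- by rewrite /dpath /= sp pa eqxx.
- by rewrite /dpath /= st tpc -c_eq eqxx.
- by move=> w; rewrite !inE => /orP[] /eqP ->.
Qed.

Lemma leaf_parent_cases a b p : a \in leaves E -> b \in leaves E -> E p a ->
  (forall c, ~ displays_triple E a c b) ->
  (outdeg E p = 2 /\ connect E p b) \/
  (is_reticulation E p /\ forall s, E s p -> connect E s b).
Proof.
move=> la lb pa unsplit; have [p2 | rp] := arc_tail_kind pa.
  left; split=> //; apply: contraT => pNb.
  by have [c /unsplit] := tree_parent_splits la lb pa p2 pNb.
right; split=> // s sp; apply: contraT => sNb.
by have [c /unsplit] := reticulation_parent_splits la lb pa rp sp sNb.
Qed.

Lemma parents_eq_of_cross_connect a b p q : a \in leaves E -> b \in leaves E ->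
  E p a -> E q b -> connect E p b -> connect E q a -> p = q.
Proof.
move=> la lb pa qb pb qa; apply: (connect_antisym acyc).
  exact: connect_leaf_parent lb qb pb (arc_tail_nonleaf pa).
exact: connect_leaf_parent la pa qa (arc_tail_nonleaf qb).
Qed.

Lemma reticulation_parent_eq a b p q : a \in leaves E -> b \in leaves E ->
  E p a -> E q b -> is_reticulation E p -> (forall s, E s p -> connect E s b) ->
  connect E q a -> p = q.
Proof.
move=> la lb pa qb rp p_above qa; have [// | pq] := eqVneq p q.
have [|s qs sp] := connect_last_arc (connect_leaf_parent la pa qa (arc_tail_nonleaf qb)).
  by rewrite eq_sym.
have sq : s = q.
  apply: (connect_antisym acyc) qs.
  exact: connect_leaf_parent lb qb (p_above s sp) (arc_tail_nonleaf sp).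
have p2 : indeg E p = 2 by case/andP: rp => /eqP.
have [s'] := other_mem_card2 s p2; rewrite inE => s'p s's.
 case/negP: (reticulation_parents_incomparable rp s'p sp s's).
by rewrite sq; exact: connect_leaf_parent lb qb (p_above s' s'p) (arc_tail_nonleaf s'p).
Qed.

Lemma reticulation_parents_eq a b p q : a \in leaves E -> b \in leaves E ->
  E p a -> E q b -> is_reticulation E p -> is_reticulation E q ->
  (forall s, E s p -> connect E s b) -> (forall s, E s q -> connect E s a) -> p = q.
Proof.
move=> la lb pa qb rp rq p_above q_above; have [// | pq] := eqVneq p q.
have /card_gt0P[s1] : 0 < indeg E p by case/andP: rp => /eqP ->.
rewrite inE => s1p.
have s1q := connect_leaf_parent lb qb (p_above s1 s1p) (arc_tail_nonleaf s1p).
have [|r1 s1r1 r1q] := connect_last_arc s1q.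
  apply: contraNneq (arc_tail_nonleaf pa) => s1_eq.
  by rewrite -s1_eq in rq qb; rewrite (reticulation_child_uniq rq s1p qb).
have r1p := connect_leaf_parent la pa (q_above r1 r1q) (arc_tail_nonleaf r1q).
have [|s r1s sp] := connect_last_arc r1p.
  apply: contraNneq (arc_tail_nonleaf qb) => r1_eq.
  by rewrite r1_eq in r1q; rewrite (reticulation_child_uniq rp r1q pa).
have [s1s | s1Ns] := eqVneq s1 s; last first.
  case/negP: (reticulation_parents_incomparable rp s1p sp s1Ns).
  exact: connect_trans s1r1 r1s.
have r1s1 : r1 = s1 by apply: (connect_antisym acyc) s1r1; rewrite s1s.
rewrite r1s1 in r1q; have [t s1t t1] := arc_tail_tree_child s1p.
have : 2 < outdeg E s1.
  apply/card_gt2P; exists p, q, t; rewrite !inE s1p r1q s1t.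
  by split=> //; rewrite pq (reticulation_neq_indeg1 rq t1) eq_sym reticulation_neq_indeg1.
by rewrite ltnNge outdeg_le2.
Qed.

Lemma cherry_outgroup_notin_ingroup a b p x y z : a \in leaves E -> E p a -> E p b ->
  displays_triple E x y z -> z = a -> b \notin [:: x; y].
Proof.
move=> la pa pb [[lx ly _ _] [r' [u [p1 [p2 [p3 [p4 [[_ d2 d3 d4] [[_ n2 n3 n4] D]]]]]]]]] za.
case: D => _ [_ [_ [_ [D23 D24]]]].
have p2p : p \in r' :: p2 by apply: leaf_parent_mem_dpath la pa _ n2; rewrite -za.
apply/negP; rewrite !inE => /orP[] /eqP b_eq; rewrite b_eq in pb.
  by move: (D23 _ p2p); rewrite (leaf_parent_mem_dpath lx pb d3 n3).
by move: (D24 _ p2p); rewrite (leaf_parent_mem_dpath ly pb d4 n4).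
Qed.

Lemma triples_of_cherry a b : a \in leaves E -> b \in leaves E -> a != b -> cherry E a b ->
  forall x y z, displays_triple E x y z -> a \in [:: x; y; z] -> b \in [:: x; y; z] ->
  (a = x /\ b = y) \/ (a = y /\ b = x).
Proof.
move=> la lb ab [p /andP[pa pb]] x y z dt.
rewrite !inE => /or3P[] /eqP ea /or3P[] /eqP eb; subst a b;
  try by [left | right | rewrite eqxx in ab].
all: first [ have := cherry_outgroup_notin_ingroup lb pb pa dt erefl
           | have := cherry_outgroup_notin_ingroup la pa pb dt erefl ].
all: by rewrite !inE eqxx ?orbT.
Qed.

Lemma cherry_of_triples a b : a \in leaves E -> b \in leaves E -> a != b ->
  (forall x y z, displays_triple E x y z -> a \in [:: x; y; z] -> b \in [:: x; y; z] ->
     (a = x /\ b = y) \/ (a = y /\ b = x)) ->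
  cherry E a b.
Proof.
move=> la lb ab triples.
have unsplit_ab c : ~ displays_triple E a c b.
  move=> dt; have [[_ _ _ [ac _ cb]] _] := dt.
  have := triples a c b dt; rewrite !inE !eqxx !orbT => /(_ isT isT).
  by case=> [[_ bc] | [ac' _]]; [rewrite bc eqxx in cb | rewrite ac' eqxx in ac].
have unsplit_ba c : ~ displays_triple E b c a.
  move=> dt; have [[_ _ _ [_ _ ca]] _] := dt.
  have := triples b c a dt; rewrite !inE !eqxx !orbT => /(_ isT isT).
  by case=> [[ab' _] | [ac _]]; [rewrite ab' eqxx in ab | rewrite ac eqxx in ca].
have [p pa] := leaf_has_parent la; have [q qb] := leaf_has_parent lb.
suff pq : p = q by exists p; rewrite pa pq qb.
have [[_ pb] | [rp p_above]] := leaf_parent_cases la lb pa unsplit_ab;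
have [[_ qa] | [rq q_above]] := leaf_parent_cases lb la qb unsplit_ba.
- exact: parents_eq_of_cross_connect la lb pa qb pb qa.
- exact/esym/(reticulation_parent_eq lb la qb pa rq q_above pb).
- exact: reticulation_parent_eq la lb pa qb rp p_above qa.
- exact: reticulation_parents_eq la lb pa qb rp rq p_above q_above.
Qed.

End NormalNetwork.

Theorem lemma2 (V : finType) (E : rel V) (a b : V) :
  normal_network E ->
  3 <= #|leaves E| ->
  a \in leaves E -> b \in leaves E -> a != b ->
  (cherry E a b <->
   (forall x y z : V, displays_triple E x y z ->
      a \in [:: x; y; z] -> b \in [:: x; y; z] ->
      (a = x /\ b = y) \/ (a = y /\ b = x))).
Proof.
move=> [[acyc [r [root_r kinds]]] [tc no_shortcut]] _ la lb ab; split.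
  exact: (triples_of_cherry root_r kinds).
exact: (cherry_of_triples acyc root_r kinds tc no_shortcut).
Qed.
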